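(* Let $\mathcal{C}$ be one of the following categories: the category of non-empty sets; the category of pointed sets; the category of groups; the category of modules over some ring. Let $\mathcal{D}$ be one of the following categories: finite sets; finite groups; countable groups; finitely generated modules over a ring $R$. Then any functor from $\mathcal{C}$ to $\mathcal{D}$ is isomorphic to a constant functor. *)

From HB Require Import structures.
From mathcomp Require Import all_boot all_order all_fingroup all_algebra.
From Stdlib Require Import ProofIrrelevance FunctionalExtensionality.
Set Implicit Arguments. Unset Strict Implicit. Unset Printing Implicit Defensive.
Import GRing.Theory.
Local Open Scope ring_scope.

Record Category := {
  Obj :> Type;
  Hom : Obj -> Obj -> Type;
  idm : forall a, Hom a a;
  comp : forall a b c, Hom b c -> Hom a b -> Hom a c;
  comp_id_l : forall a b (f : Hom a b), comp (idm b) f = f;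
  comp_id_r : forall a b (f : Hom a b), comp f (idm a) = f;
  comp_assoc : forall a b c d (h : Hom c d) (g : Hom b c) (f : Hom a b),
      comp h (comp g f) = comp (comp h g) f
}.
Arguments Hom {_} _ _.
Arguments idm {_} _.
Arguments comp {_ _ _ _} _ _.

Record Functor (C D : Category) := {
  fobj :> C -> D;
  fmap : forall a b : C, Hom a b -> Hom (fobj a) (fobj b);
  fmap_id : forall a : C, fmap (idm a) = idm (fobj a);
  fmap_comp : forall (a b c : C) (g : Hom b c) (f : Hom a b),
      fmap (comp g f) = comp (fmap g) (fmap f)
}.
Arguments fmap {_ _} _ {_ _} _.

Definition ConstFunctor (C D : Category) (X : D) : Functor C D :=
  @Build_Functor C D (fun _ => X) (fun _ _ _ => idm X)
    (fun _ => erefl) (fun _ _ _ _ _ => esym (comp_id_l (idm X))).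

Definition NatIso (C D : Category) (F G : Functor C D) : Prop :=
  exists (eta : forall a : C, Hom (F a) (G a))
         (inv : forall a : C, Hom (G a) (F a)),
    (forall a, comp (inv a) (eta a) = idm (F a)) /\
    (forall a, comp (eta a) (inv a) = idm (G a)) /\
    (forall (a b : C) (f : Hom a b), comp (eta b) (fmap F f) = comp (fmap G f) (eta a)).

Definition only_constant_functors (C D : Category) : Prop :=
  forall F : Functor C D, exists X : D, NatIso F (ConstFunctor C X).

Lemma sig_eq_val (A : Type) (P : A -> Prop) (x y : {a | P a}) :
  proj1_sig x = proj1_sig y -> x = y.
Proof.
case: x => a pa; case: y => b pb /= eab; subst b.
by rewrite (proof_irrelevance _ pa pb).
Qed.

Record Grp := {
  gcar :> Type;
  gmul : gcar -> gcar -> gcar;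
  gone : gcar;
  ginv : gcar -> gcar;
  gmulA : forall x y z, gmul x (gmul y z) = gmul (gmul x y) z;
  gmul1 : forall x, gmul gone x = x;
  gmulV : forall x, gmul (ginv x) x = gone
}.

Definition grp_hom (G H : Grp) : Type :=
  {f : G -> H | forall x y, f (gmul x y) = gmul (f x) (f y)}.

Definition countable_type (T : Type) : Prop :=
  exists f : T -> nat, injective f.

Definition NonEmptySets : Category.
unshelve refine (@Build_Category {T : Type | inhabited T}
          (fun A B => proj1_sig A -> proj1_sig B)
          (fun A => id) (fun A B C g f => g \o f) _ _ _); by [].
Defined.

Definition PointedSets : Category.
unshelve refine (@Build_Category {T : Type & T}
          (fun A B => {f : projT1 A -> projT1 B | f (projT2 A) = projT2 B})
          (fun A => exist _ id erefl)
          (fun A B C g f => exist _ (proj1_sig g \o proj1_sig f) _) _ _ _).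
- by rewrite /= (proj2_sig f) (proj2_sig g).
- by move=> a b f; apply: sig_eq_val.
- by move=> a b f; apply: sig_eq_val.
- by move=> a b c d h g f; apply: sig_eq_val.
Defined.

Definition Groups : Category.
unshelve refine (@Build_Category Grp grp_hom
          (fun G => exist _ id _)
          (fun A B C g f => exist _ (proj1_sig g \o proj1_sig f) _) _ _ _).
- by [].
- by move=> x y /=; rewrite (proj2_sig f) (proj2_sig g).
- by move=> a b f; apply: sig_eq_val.
- by move=> a b f; apply: sig_eq_val.
- by move=> a b c d h g f; apply: sig_eq_val.
Defined.

Definition Modules (S : pzRingType) : Category.
unshelve refine (@Build_Category (lmodType S)
          (fun M N => {f : M -> N | linear f})
          (fun M => exist _ id _)
          (fun A B C g f => exist _ (proj1_sig g \o proj1_sig f) _) _ _ _).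
- by [].
- by move=> a u v /=; rewrite (proj2_sig f) (proj2_sig g).
- by move=> a b f; apply: sig_eq_val.
- by move=> a b f; apply: sig_eq_val.
- by move=> a b c d h g f; apply: sig_eq_val.
Defined.

Definition FinSets : Category.
unshelve refine (@Build_Category finType (fun A B => A -> B)
          (fun A => id) (fun A B C g f => g \o f) _ _ _); by [].
Defined.

(* finite groups: a finGroupType is a finite group (the whole type) *)
Definition FinGroups : Category.
unshelve refine (@Build_Category finGroupType
          (fun G H => {f : G -> H | {morph f : x y / (x * y)%g}})
          (fun G => exist _ id _)
          (fun A B C g f => exist _ (proj1_sig g \o proj1_sig f) _) _ _ _).
- by [].
- by move=> x y /=; rewrite (proj2_sig f) (proj2_sig g).
- by move=> a b f; apply: sig_eq_val.
- by move=> a b f; apply: sig_eq_val.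
- by move=> a b c d h g f; apply: sig_eq_val.
Defined.

Definition CountableGroups : Category.
unshelve refine (@Build_Category {G : Grp | countable_type G}
          (fun G H => grp_hom (proj1_sig G) (proj1_sig H))
          (fun G => exist _ id _)
          (fun A B C g f => exist _ (proj1_sig g \o proj1_sig f) _) _ _ _).
- by [].
- by move=> x y /=; rewrite (proj2_sig f) (proj2_sig g).
- by move=> a b f; apply: sig_eq_val.
- by move=> a b f; apply: sig_eq_val.
- by move=> a b c d h g f; apply: sig_eq_val.
Defined.

Definition fin_generated (R : pzRingType) (M : lmodType R) : Prop :=
  exists (n : nat) (v : 'I_n -> M),
    forall m : M, exists c : 'I_n -> R, m = \sum_(i < n) c i *: v i.

Definition FGModules (R : pzRingType) : Category.
unshelve refine (@Build_Category {M : lmodType R | fin_generated M}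
          (fun M N => {f : proj1_sig M -> proj1_sig N | linear f})
          (fun M => exist _ id _)
          (fun A B C g f => exist _ (proj1_sig g \o proj1_sig f) _) _ _ _).
- by [].
- by move=> a u v /=; rewrite (proj2_sig f) (proj2_sig g).
- by move=> a b f; apply: sig_eq_val.
- by move=> a b f; apply: sig_eq_val.
- by move=> a b c d h g f; apply: sig_eq_val.
Defined.

Inductive source_kind :=
  | SrcNonEmptySets | SrcPointedSets | SrcGroups | SrcModules of pzRingType.

Definition source_cat (k : source_kind) : Category :=
  match k with
  | SrcNonEmptySets => NonEmptySets
  | SrcPointedSets => PointedSets
  | SrcGroups => Groups
  | SrcModules Rg => Modules Rg
  end.

Inductive target_kind :=
  | TgtFinSets | TgtFinGroups | TgtCountableGroups | TgtFGModules of pzRingType.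

Definition target_cat (k : target_kind) : Category :=
  match k with
  | TgtFinSets => FinSets
  | TgtFinGroups => FinGroups
  | TgtCountableGroups => CountableGroups
  | TgtFGModules Rg => FGModules Rg
  end.

From HB Require Import structures.
From mathcomp Require Import all_boot all_order all_fingroup all_algebra.
From mathcomp Require Import functions.
From Stdlib Require Import FunctionalExtensionality Classical ClassicalEpsilon.
Set Implicit Arguments. Unset Strict Implicit. Unset Printing Implicit Defensive.
Import GRing.Theory.

(* Every object X of a source category has the endomorphism z_X : X -> 1 -> X
   through the trivial object, and for every set A the power X^A carries, for
   each subset S of A, the endomorphism e_S keeping the coordinates in S and
   collapsing the others, so that projection o e_S o inclusion at i is id_X for
   i in S and z_X otherwise.  The endomorphisms of an object of a target
   category inject into one fixed set A (nat -> nat, or nat -> nat -> R for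
   finitely generated R-modules).  Given a functor F, Cantor's theorem makes
   S |-> F(e_S) non-injective on subsets of A, and at a coordinate where two
   colliding subsets differ we get F(z_X) = F(id_X) = id.  So F(X) -> F(1) ->
   F(X) is an isomorphism, natural in X, and F is isomorphic to the constant
   functor at F(1). *)

Lemma inj_left_inverse (T U : Type) (f : T -> U) :
  inhabited T -> injective f -> exists g : U -> T, cancel f g.
Proof.
move=> inhT f_inj; exists (fun y => epsilon inhT (fun x => f x = y)) => x.
by apply: f_inj; apply: (epsilon_spec inhT (fun x' => f x' = f x)); exists x.
Qed.

Lemma cantor_collision (A : Type) (g : (A -> bool) -> A) :
  exists S T, S <> T /\ g S = g T.
Proof.
apply: NNPP => no_collision.
have g_inj : injective g.
  move=> S T gST; apply: NNPP => neST.
  by apply: no_collision; exists S, T.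
have [g' gK] := inj_left_inverse (inhabits xpredT) g_inj.
pose diag a := ~~ g' a a.
have diag_fix : diag (g diag) = ~~ diag (g diag) :=
  congr1 negb (congr1 (fun S => S (g diag)) (gK diag)).
by case: (diag (g diag)) diag_fix.
Qed.

Record basepoint (C : Category) := {
  base : C;
  collapse : forall X : C, Hom X base;
  point : forall X : C, Hom base X;
  collapse_point : forall X, comp (collapse X) (point X) = idm base;
  collapse_natural : forall X Y (f : Hom X Y), comp (collapse Y) f = collapse X
}.

Definition const_point (C : Category) (B : basepoint C) (X : C) : Hom X X :=
  comp (point B X) (collapse B X).

Definition has_masks (C : Category) (B : basepoint C) (A : Type) : Prop :=
  forall X : C, exists (Y : C) (proj : A -> Hom Y X) (incl : A -> Hom X Y)
                       (mask : (A -> bool) -> Hom Y Y),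
    forall S i, comp (proj i) (comp (mask S) (incl i)) =
                if S i then idm X else const_point B X.

Definition endos_inject_into (D : Category) (A : Type) : Prop :=
  forall d : D, exists h : Hom d d -> A, injective h.

Section ConstantFunctors.
Variables (C D : Category) (B : basepoint C) (F : Functor C D).

Lemma natiso_const_base :
  (forall X, fmap F (const_point B X) = idm (F X)) ->
  NatIso F (ConstFunctor C (F (base B))).
Proof.
move=> F_const_point.
exists (fun X => fmap F (collapse B X)), (fun X => fmap F (point B X)).
split; [|split] => [X|X|X Y f] /=.
- by rewrite -fmap_comp F_const_point.
- by rewrite -fmap_comp collapse_point fmap_id.
- by rewrite comp_id_l -fmap_comp collapse_natural.
Qed.

Lemma fmap_const_point_id (A : Type) :
  has_masks B A -> endos_inject_into D A ->
  forall X, fmap F (const_point B X) = idm (F X).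
Proof.
move=> masks endos X; have [Y [proj [incl [mask maskE]]]] := masks X.
have [h h_inj] := endos (F Y).
have [S [T [neST /h_inj FST]]] := cantor_collision (fun S => h (fmap F (mask S))).
have [i neSTi] : exists i, S i <> T i.
  apply: NNPP => eqST; apply: neST; apply: functional_extensionality => i.
  by apply: NNPP => neSTi; apply: eqST; exists i.
have := congr1 (fun e => comp (fmap F (proj i)) (comp e (fmap F (incl i)))) FST.
rewrite -!fmap_comp !maskE.
by case: (S i) (T i) neSTi => [] [] // _; rewrite fmap_id => ->.
Qed.

End ConstantFunctors.

Lemma only_constant_functors_of_masks (C D : Category) (B : basepoint C) (A : Type) :
  has_masks B A -> endos_inject_into D A -> only_constant_functors C D.
Proof.
move=> masks endos F; exists (F (base B)).
by apply: natiso_const_base; apply: fmap_const_point_id masks endos.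
Qed.

Definition inhabitant (X : NonEmptySets) : sval X :=
  epsilon (proj2_sig X) (fun _ => True).

Definition sets_basepoint : basepoint NonEmptySets.
Proof.
refine {| base := exist inhabited unit (inhabits tt) : NonEmptySets;
          collapse X := fun _ => tt;
          point X := fun _ => inhabitant X |} => [X|//].
by apply: functional_extensionality => -[].
Defined.

Lemma sets_has_masks (A : Type) : has_masks sets_basepoint A.
Proof.
move=> X; pose pt := inhabitant X.
exists (exist inhabited (A -> sval X) (inhabits (fun _ => pt))).
exists (fun i f => f i), (fun i x _ => x), (fun S f j => if S j then f j else pt).
by move=> S i; apply: functional_extensionality => x /=; case: (S i).
Qed.

Definition pointed_basepoint : basepoint PointedSets.
Proof.
refine {| base := existT (fun T => T) unit tt : PointedSets;
          collapse X := exist _ (fun _ => tt) erefl;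
          point X := exist _ (fun _ => projT2 X) erefl |} => [X|X Y f].
- by apply: sig_eq_val; apply: functional_extensionality => -[].
- exact: sig_eq_val.
Defined.

Lemma pointed_has_masks (A : Type) : has_masks pointed_basepoint A.
Proof.
move=> X; pose pt := projT2 X.
pose Y : PointedSets := existT (fun T => T) (A -> projT1 X) (fun _ => pt).
exists Y.
exists (fun i => exist _ (fun f : A -> projT1 X => f i) erefl : Hom Y X).
exists (fun i => exist _ (fun x (_ : A) => x) erefl : Hom X Y).
unshelve eexists (fun S => exist _ (fun f j => if S j then f j else pt) _ : Hom Y Y).
  by apply: functional_extensionality => j /=; case: (S j).
by move=> S i; apply: sig_eq_val; apply: functional_extensionality => x /=; case: (S i).
Qed.

Definition unit_grp : Grp.
Proof. by refine (@Build_Grp unit (fun _ _ => tt) tt (fun _ => tt) _ _ _) => -[]. Defined.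

Definition pow_grp (A : Type) (G : Grp) : Grp.
Proof.
refine (@Build_Grp (A -> G) (fun f g j => gmul (f j) (g j)) (fun _ => gone G)
          (fun f j => ginv (f j)) _ _ _) => *;
  by apply: functional_extensionality => j; rewrite ?gmulA ?gmul1 ?gmulV.
Defined.

Definition grp_morph (G H : Grp) (f : G -> H)
    (fM : forall x y, f (gmul x y) = gmul (f x) (f y)) : Hom (G : Groups) H :=
  exist _ f fM.
Arguments grp_morph {G H} f fM.

Definition groups_basepoint : basepoint Groups.
Proof.
refine {| base := unit_grp : Groups;
          collapse X := grp_morph (fun _ : X => tt : unit_grp) (fun _ _ => erefl);
          point X := grp_morph (fun _ : unit_grp => gone X) (fun _ _ => esym (gmul1 _)) |}
  => [X|X Y f].
- by apply: sig_eq_val; apply: functional_extensionality => -[].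
- exact: sig_eq_val.
Defined.

Lemma groups_has_masks (A : Type) : has_masks groups_basepoint A.
Proof.
move=> X; pose Y := pow_grp A X.
exists (Y : Groups).
exists (fun i => grp_morph (fun f : Y => f i) (fun _ _ => erefl)).
exists (fun i => grp_morph (fun x : X => (fun _ => x) : Y) (fun _ _ => erefl)).
unshelve eexists (fun S => grp_morph (fun f : Y => (fun j => if S j then f j else gone X) : Y) _).
  by move=> f g; apply: functional_extensionality => j /=; case: (S j); rewrite ?gmul1.
by move=> S i; apply: sig_eq_val; apply: functional_extensionality => x /=; case: (S i).
Qed.

Section ModulesBasepoint.
Variable R : pzRingType.
Local Open Scope ring_scope.

Definition modules_basepoint : basepoint (Modules R).
Proof.
unshelve refine {| base := 'rV[R]_0 : Modules R;
                   collapse X := exist _ (fun _ => 0) _;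
                   point X := exist _ (fun _ => 0) _ |} => [a x y|a x y|X|X Y f].
- by rewrite scaler0 addr0.
- by rewrite scaler0 addr0.
- by apply: sig_eq_val; apply: functional_extensionality => x; rewrite [x]thinmx0.
- exact: sig_eq_val.
Defined.

Lemma modules_has_masks (A : Type) : has_masks modules_basepoint A.
Proof.
move=> X; pose Y : Modules R := (A -> X : lmodType R).
exists Y.
unshelve eexists (fun i => exist _ (fun f : A -> X => f i) _ : Hom Y X) => [a f g //|].
unshelve eexists (fun i => exist _ (fun x (_ : A) => x) _ : Hom X Y) => [a x y //|].
unshelve eexists (fun S => exist _ (fun (f : A -> X) j => if S j then f j else 0) _ : Hom Y Y).
  move=> a f g; apply: functional_extensionality => j /=.
  by rewrite !fctE; case: (S j); rewrite ?scaler0 ?addr0.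
by move=> S i; apply: sig_eq_val; apply: functional_extensionality => x /=; case: (S i).
Qed.

End ModulesBasepoint.

Definition source_basepoint (k : source_kind) : basepoint (source_cat k) :=
  match k with
  | SrcNonEmptySets => sets_basepoint
  | SrcPointedSets => pointed_basepoint
  | SrcGroups => groups_basepoint
  | SrcModules R => modules_basepoint R
  end.

Lemma source_has_masks (k : source_kind) (A : Type) : has_masks (source_basepoint k) A.
Proof.
case: k => [|||R]; [exact: sets_has_masks | exact: pointed_has_masks
                   | exact: groups_has_masks | exact: modules_has_masks].
Qed.

Lemma countable_endo_code (T : Type) (c : T -> nat) :
  injective c -> exists h : (T -> T) -> nat -> nat, injective h.
Proof.
move=> c_inj; have [inhT | emptyT] := classic (inhabited T).
- have [c' cK] := inj_left_inverse inhT c_inj.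
  exists (fun f => c \o f \o c') => f g code_eq.
  apply: functional_extensionality => x; apply: c_inj.
  by have := congr1 (fun k => k (c x)) code_eq; rewrite /= cK.
- exists (fun _ _ => 0%N) => f g _; apply: functional_extensionality => x.
  by case: emptyT; exists.
Qed.

Lemma finsets_endos : endos_inject_into FinSets (nat -> nat).
Proof. by move=> T; apply: countable_endo_code (pcan_inj (@pickleK T)). Qed.

Lemma fingroups_endos : endos_inject_into FinGroups (nat -> nat).
Proof.
move=> G; have [h h_inj] := countable_endo_code (pcan_inj (@pickleK G)).
by exists (h \o sval); apply: inj_comp h_inj (@sig_eq_val _ _).
Qed.

Lemma countable_groups_endos : endos_inject_into CountableGroups (nat -> nat).
Proof.
move=> [G [c c_inj]]; have [h h_inj] := countable_endo_code c_inj.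
by exists (h \o sval); apply: inj_comp h_inj (@sig_eq_val _ _).
Qed.

Definition ord_extend (T : Type) (x0 : T) (n : nat) (c : 'I_n -> T) : nat -> T :=
  fun j => if insub j is Some i then c i else x0.

Lemma ord_extend_inj (T : Type) (x0 : T) (n : nat) : injective (@ord_extend T x0 n).
Proof.
move=> c c' ext_eq; apply: functional_extensionality => i.
by have := congr1 (fun e => e (val i)) ext_eq; rewrite /ord_extend valK.
Qed.

Section FinitelyGeneratedModules.
Variables (R : pzRingType) (M : lmodType R) (n : nat) (v : 'I_n -> M).
Local Open Scope ring_scope.
Hypothesis v_span : forall m : M, exists c : 'I_n -> R, m = \sum_(i < n) c i *: v i.

Lemma linear_eq_on_span (N : lmodType R) (f g : M -> N) :
  linear f -> linear g -> (forall i, f (v i) = g (v i)) -> f = g.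
Proof.
move=> f_lin g_lin fg_v.
pose fL : {linear M -> N} := HB.pack f (GRing.isLinear.Build _ _ _ _ f f_lin).
pose gL : {linear M -> N} := HB.pack g (GRing.isLinear.Build _ _ _ _ g g_lin).
apply: functional_extensionality => m; have [c ->] := v_span m.
rewrite -[f]/(fL : M -> N) -[g]/(gL : M -> N) !linear_sum.
by apply: eq_bigr => i _; rewrite !linearZ /= fg_v.
Qed.

Lemma coordinates_exist :
  exists coord : M -> 'I_n -> R, cancel coord (fun c => \sum_(i < n) c i *: v i).
Proof.
have [coord coordP] := choice (fun m c => m = \sum_(i < n) c i *: v i) v_span.
by exists coord => m; rewrite -coordP.
Qed.

End FinitelyGeneratedModules.

Lemma fg_modules_endos (R : pzRingType) : endos_inject_into (FGModules R) (nat -> nat -> R).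
Proof.
move=> [M [n [v v_span]]]; have [coord coordK] := coordinates_exist v_span.
exists (fun f => ord_extend (fun _ => 0%R)
                   (fun i => ord_extend 0%R (coord (sval f (v i))))).
move=> [f f_lin] [g g_lin] code_eq; apply: sig_eq_val => /=.
apply: (linear_eq_on_span v_span f_lin g_lin) => i.
have coord_eq := ord_extend_inj (congr1 (fun e => e i) (ord_extend_inj code_eq)).
by rewrite -[f (v i)]coordK -[g (v i)]coordK /= coord_eq.
Qed.

Lemma target_endos_inject (k : target_kind) :
  exists A : Type, endos_inject_into (target_cat k) A.
Proof.
case: k => [|||R]; eexists; [exact: finsets_endos | exact: fingroups_endos
                            | exact: countable_groups_endos | exact: fg_modules_endos].
Qed.

Theorem corollary2p7 (C : source_kind) (D : target_kind) :
  only_constant_functors (source_cat C) (target_cat D).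
Proof.
have [A endos] := target_endos_inject D.
exact (only_constant_functors_of_masks (@source_has_masks C A) endos).
Qed.
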